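(* For all integers $n\ge 4$ and $2\le k\le n/2$, there exists a feasible simple homogeneous PV graph $\vec G_R$ with $n$ sites and $k$ carriers such that $$\mathcal M(\vec G_R)\ >\ \tfrac18\,k\,n\,(n-8).$$ (This holds even though the agent knows $\vec G_R$ and $k$ and has unlimited memory.)
   Context: A PV (periodically varying) system consists of a finite set $S$ of $n$ sites and a set $C$ of $k\le n$ carriers. Each carrier $c$ has a route $\pi(c)=\langle x_0,\dots,x_{p(c)-1}\rangle$, a finite sequence of sites of length $p(c)\ge1$ called its period; $\pi(c)[j]=x_{j\bmod p(c)}$. At each time $t\in\mathbb N$ carrier $c$ is at $\pi(c)[t]$ and moves to $\pi(c)[t+1]$. The PV graph $\vec G_R$ is the directed edge-labelled multigraph on $S$ with edges $(x_i,x_{i+1},i)$, $0\le i<p(c)$, for every carrier. The system is homogeneous if all $p(c)$ are equal, heterogeneous otherwise. A route is simple if $\pi(c)[i]\ne\pi(c)[i+1]$ for all $i$ and, whenever $\pi(c)[i]=\pi(c)[j]$ with $0\le i<j<p(c)$, then $\pi(c)[i+1]\ne\pi(c)[j+1]$ (no self-loops and no repeated directed edge within one period); a PV graph is simple if all its routes are simple. An exploring agent is injected at time $0$ at a site of $\mathrm{start}(\vec G_R)=\{\pi(c)[0]:c\in C\}$; if at time $t$ it is at site $x$ it must either ride one step with some carrier $c$ with $\pi(c)[t]=x$ (one move) or halt; it cannot wait. A strategy solves PVG-Exploration of $\vec G_R$ if from every injection site the agent visits all sites and halts in finite time. $\vec G_R$ is feasible if from the starting point of every carrier some realizable walk visits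 all sites. For feasible $\vec G_R$, $\mathcal M(\vec G_R)$ denotes the minimum, over all deterministic strategies solving PVG-Exploration of $\vec G_R$ (which may use full knowledge of $\vec G_R$ and unlimited memory), of the maximum over injection sites of the number of moves performed. *)

From mathcomp Require Import all_boot all_order all_algebra.
Set Implicit Arguments. Unset Strict Implicit. Unset Printing Implicit Defensive.

Section PV.
Variables (S C : finType).

(* A PV system with sites S and carriers C.  Carrier c has period
   [per c] and route <rt c 0, ..., rt c (per c - 1)>; values of
   [rt c j] for j >= per c are irrelevant (never used). *)
Record PVsys := PVSys { per : C -> nat; rt : C -> nat -> S }.

Variable R : PVsys.

Definition pos (c : C) (j : nat) : S := rt R c (j %% per R c).

Definition well_formed : Prop := forall c, 0 < per R c.

Definition homogeneous : Prop := forall c c', per R c = per R c'.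

(* simple route: no self-loop and no repeated directed edge in a period *)
Definition simple_route (c : C) : Prop :=
  (forall i, i < per R c -> pos c i != pos c i.+1) /\
  (forall i j, i < j -> j < per R c -> pos c i = pos c j ->
       pos c i.+1 != pos c j.+1).

Definition simple_PV : Prop := forall c, simple_route c.

Definition start : {set S} := [set pos c 0 | c : C].

(* A walk is the sequence of carriers ridden, one move per time step;
   the agent at site x at time t may ride c only if pi(c)[t] = x, and
   then it is at pi(c)[t+1] at time t+1. *)
Fixpoint valid_from (x : S) (t : nat) (cs : seq C) : bool :=
  if cs is c :: cs' then (pos c t == x) && valid_from (pos c t.+1) t.+1 cs'
  else true.

Fixpoint trace (x : S) (t : nat) (cs : seq C) : seq S :=
  x :: (if cs is c :: cs' then trace (pos c t.+1) t.+1 cs' else [::]).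

Definition explores (s : S) (cs : seq C) : Prop :=
  valid_from s 0 cs /\ forall y : S, y \in trace s 0 cs.

Definition feasible : Prop := forall c, exists cs, explores (pos c 0) cs.

(* A deterministic strategy with full knowledge of G_R and unlimited memory
   determines, for each injection site, the finite walk performed before
   halting. *)
Definition strategy := S -> seq C.

Definition solves (sigma : strategy) : Prop :=
  forall s, s \in start -> explores s (sigma s).

Definition cost (sigma : strategy) : nat := \max_(s in start) size (sigma s).

End PV.

From mathcomp Require Import all_boot all_order all_algebra zify.
Set Implicit Arguments. Unset Strict Implicit. Unset Printing Implicit Defensive.
Import Order.TTheory GRing.Theory Num.Theory.
Arguments pos : simpl never.

(* Hard instances for N >= 9 sites and K carriers.  Put m = N - K.  Every
   carrier i < K follows the same closed walk of period p = D * (2 * m),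
   D = (m - 2) %/ 2, on the "base" sites 0, ..., m - 1, shifted by i, so that
   two carriers never share a base site; the walk is simple because in round
   q < D it alternates j -> j + q.+2 -> j.+1 (mod m), and the difference of
   two consecutive sites determines both q and the parity of the time.  Two
   slots of the period are diverted to the other K sites: carriers i and i.+1
   meet exactly once per period, at site m + i, and the last site m + K.-1 is
   visited by carrier K.-1 only.  Starting on carrier 0, the agent can thus be
   on carrier c only after time c * p.-1, and reaches the last site only after
   K * p.-1 > K * N * (N - 8) / 8 moves.  For N <= 8 the bound is not positive
   and carriers rotating around all sites give a simple feasible system. *)

Section Walks.
Variables (S C : finType) (R : PVsys S C).

Fixpoint walk_last (x : S) (t : nat) (cs : seq C) : S :=
  if cs is c :: cs' then walk_last (pos R c t.+1) t.+1 cs' else x.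

Lemma valid_from_cat x t cs1 cs2 :
  valid_from R x t (cs1 ++ cs2) =
  valid_from R x t cs1 && valid_from R (walk_last x t cs1) (t + size cs1) cs2.
Proof.
elim: cs1 x t => [|c cs IH] x t /=; first by rewrite addn0.
by rewrite IH addSnnS andbA.
Qed.

Lemma walk_last_cat x t cs1 cs2 :
  walk_last x t (cs1 ++ cs2) = walk_last (walk_last x t cs1) (t + size cs1) cs2.
Proof.
elim: cs1 x t => [|c cs IH] x t /=; first by rewrite addn0.
by rewrite IH addnS -addSn.
Qed.

Lemma mem_trace_head x t cs : x \in trace R x t cs.
Proof. by case: cs => [|? ?]; rewrite inE eqxx. Qed.

Lemma mem_trace_catl x t cs1 cs2 y :
  y \in trace R x t cs1 -> y \in trace R x t (cs1 ++ cs2).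
Proof.
elim: cs1 x t => [|c cs IH] x t /=; first by rewrite inE => /eqP ->; exact: mem_trace_head.
by rewrite !inE => /orP [->|/IH ->]; rewrite ?orbT.
Qed.

Lemma mem_trace_catr x t cs1 cs2 y :
  y \in trace R (walk_last x t cs1) (t + size cs1) cs2 -> y \in trace R x t (cs1 ++ cs2).
Proof.
elim: cs1 x t => [|c cs IH] x t /=; first by rewrite addn0.
by rewrite addnS -addSn => /IH H; rewrite inE H orbT.
Qed.

Lemma valid_from_nseq c t L : valid_from R (pos R c t) t (nseq L c).
Proof. by elim: L t => [|L IH] t //=; rewrite eqxx IH. Qed.

Lemma walk_last_nseq c t L : walk_last (pos R c t) t (nseq L c) = pos R c (t + L).
Proof. by elim: L t => [|L IH] t /=; rewrite ?addn0 // IH addSn addnS. Qed.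

Lemma mem_trace_nseq c t L i :
  i <= L -> pos R c (t + i) \in trace R (pos R c t) t (nseq L c).
Proof.
elim: L t i => [|L IH] t [|i] //= Hi; rewrite ?addn0 inE ?eqxx //.
by rewrite -addSnnS IH ?orbT.
Qed.

Lemma trace_invariant (P : nat -> S -> Prop) :
  (forall t c, P t (pos R c t) -> P t.+1 (pos R c t.+1)) ->
  forall cs x t, valid_from R x t cs -> P t x ->
  forall y, y \in trace R x t cs -> exists2 t', t' <= t + size cs & P t' y.
Proof.
move=> Pstep; elim=> [|c cs IH] x t /=.
  by move=> _ Px y; rewrite inE => /eqP ->; exists t; rewrite ?addn0.
case/andP=> /eqP Ec Hv Px y; rewrite inE => /orP [/eqP ->|Hy].
  by exists t; rewrite ?leq_addr.
rewrite -Ec in Px; have [t' Ht' Pt'] := IH _ _ Hv (Pstep _ _ Px) y Hy.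
by exists t' => //; rewrite addnS -addSn.
Qed.

Lemma explores_size_gt0 s cs (y : S) :
  y != s -> explores R s cs -> 0 < size cs.
Proof. by case: cs => // /negPf ys [_ /(_ y)]; rewrite inE ys. Qed.

Lemma cost_ge_size (sigma : strategy S C) s :
  s \in start R -> size (sigma s) <= cost R sigma.
Proof. exact: (leq_bigmax_cond (F := fun s => size (sigma s))). Qed.

Lemma cost_ge_invariant (P : nat -> S -> Prop) (sigma : strategy S C) s y B :
  solves R sigma -> s \in start R ->
  (forall t c, P t (pos R c t) -> P t.+1 (pos R c t.+1)) -> P 0 s ->
  (forall t, P t y -> B <= t) -> B <= cost R sigma.
Proof.
move=> sol Hs Pstep Ps Plate; have [Hv Hall] := sol s Hs.
have [t Ht Py] := trace_invariant Pstep Hv Ps (Hall y).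
by apply: leq_trans (Plate _ Py) (leq_trans Ht (cost_ge_size _ Hs)).
Qed.

End Walks.

Section BaseRoute.
Variable m : nat.

Definition base_route (t : nat) : nat :=
  let u := t %% (2 * m) in (u %/ 2 + odd u * (t %/ (2 * m)).+2) %% m.

Definition base_step (t : nat) : nat :=
  if odd t then m - (t %/ (2 * m)).+1 else (t %/ (2 * m)).+2.

Lemma round_decomp t : 0 < m -> exists q j (b : bool), j < m /\ t = q * (2 * m) + (2 * j + b).
Proof.
move=> m_gt0; exists (t %/ (2 * m)), (t %% (2 * m) %/ 2), (odd (t %% (2 * m))).
rewrite {1}(divn_eq t (2 * m)) {3}(divn_eq (t %% (2 * m)) 2) modn2; lia.
Qed.

Lemma base_route_round q j (b : bool) : j < m ->
  base_route (q * (2 * m) + (2 * j + b)) = (j + b * q.+2) %% m.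
Proof.
move=> Hj; have Hu : 2 * j + b < 2 * m by case: b; lia.
rewrite /base_route modnMDl divnMDl ?(modn_small Hu) ?(divn_small Hu) ?addn0; last lia.
by rewrite oddD oddM /=; case: b {Hu}; congr (_ %% _); lia.
Qed.

Lemma base_step_round q j (b : bool) : j < m ->
  base_step (q * (2 * m) + (2 * j + b)) = if b then m - q.+1 else q.+2.
Proof.
move=> Hj; have Hu : 2 * j + b < 2 * m by case: b; lia.
rewrite /base_step divnMDl ?(divn_small Hu) ?addn0; last lia.
by rewrite !oddD !oddM /= andbF; case: b {Hu}; case: (odd j).
Qed.

Lemma base_route_lt t : 0 < m -> base_route t < m.
Proof. exact: ltn_pmod. Qed.

Lemma base_route_onto x : 2 < m -> x < m -> exists2 t, t < (2 * m).-2 & base_route t = x.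
Proof.
move=> Hm Hx; have [Hx1|Hx1] := ltnP x.+1 m.
  exists (0 * (2 * m) + (2 * x + false)); first by rewrite /=; lia.
  by rewrite base_route_round //= addn0 modn_small.
exists (0 * (2 * m) + (2 * (m - 3) + true)); first by rewrite /=; lia.
by rewrite base_route_round /=; [rewrite modn_small|]; lia.
Qed.

Variable D : nat.
Hypotheses (D_gt0 : 0 < D) (m_gt : (2 * D).+1 < m).
Local Notation P := (D * (2 * m)).

Fact m_gt0 : 0 < m. Proof. lia. Qed.

Lemma round_lt q u : q * (2 * m) + u < P -> q < D.
Proof. by move/(leq_ltn_trans (leq_addr _ _)); rewrite ltn_pmul2r // muln_gt0 m_gt0. Qed.

Lemma base_step_bounds t : t < P -> 0 < base_step t < m.
Proof.
have [q [j [b [Hj ->]]]] := round_decomp t m_gt0 => Ht.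
have Hq := round_lt Ht.
by rewrite base_step_round //; case: b {Ht}; lia.
Qed.

Lemma base_route_succ t : t < P ->
  base_route (t.+1 %% P) = (base_route t + base_step t) %% m.
Proof.
have [q [j [b [Hj ->]]]] := round_decomp t m_gt0 => Ht.
have Hq := round_lt Ht.
rewrite base_route_round // base_step_round // modnDml.
case: b Ht => /= Ht; last first.
  have -> : (q * (2 * m) + (2 * j + 0)).+1 %% P = q * (2 * m) + (2 * j + true).
    by rewrite modn_small /=; nia.
  by rewrite base_route_round //=; congr (_ %% _); lia.
have -> : (j + 1 * q.+2 + (m - q.+1)) %% m = j.+1 %% m.
  by rewrite -(modnDr j.+1 m); congr (_ %% _); lia.
have [Hj1|Hj1] := ltnP j.+1 m.
  have -> : (q * (2 * m) + (2 * j + 1)).+1 %% P = q * (2 * m) + (2 * j.+1 + false).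
    by rewrite modn_small /=; nia.
  by rewrite base_route_round //= addn0.
(* the last step of a round leads to time 0 of the next round, or of round 0 *)
have -> : j.+1 = m by lia.
have -> : (q * (2 * m) + (2 * j + 1)).+1 %% P = q.+1 %% D * (2 * m) + (2 * 0 + false).
  case: (ltngtP q.+1 D) => HqD; first by rewrite !modn_small /=; nia.
    by nia.
  have -> : (q * (2 * m) + (2 * j + 1)).+1 = P by nia.
  by rewrite HqD !modnn.
by rewrite (@base_route_round _ 0 false) ?modnn ?mul0n ?mod0n; lia.
Qed.

Lemma base_route_succ_neq t : t < P -> base_route (t.+1 %% P) != base_route t.
Proof.
move=> Ht; rewrite base_route_succ //; have := base_step_bounds Ht.
have := base_route_lt t m_gt0; move: (base_route t) (base_step t) => x s Hx Hs.
have [Hlt|Hge] := ltnP (x + s) m; first by rewrite modn_small //; lia.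
by rewrite -(subnK Hge) modnDr modn_small; lia.
Qed.

Lemma base_route_edge_inj t1 t2 : t1 < P -> t2 < P ->
  base_route t1 = base_route t2 ->
  base_route (t1.+1 %% P) = base_route (t2.+1 %% P) -> t1 = t2.
Proof.
move=> Ht1 Ht2 Ex; rewrite !base_route_succ // Ex => /eqP; rewrite eqn_modDl.
have := base_step_bounds Ht1; have := base_step_bounds Ht2.
move=> Hs2 Hs1; rewrite !modn_small ?(andP Hs1).2 ?(andP Hs2).2 // => /eqP.
move: Ex Ht1 Ht2.
have [q1 [j1 [b1 [Hj1 ->]]]] := round_decomp t1 m_gt0.
have [q2 [j2 [b2 [Hj2 ->]]]] := round_decomp t2 m_gt0.
rewrite !base_route_round // !base_step_round // => Ex Ht1 Ht2 Es.
have Hq1 := round_lt Ht1; have Hq2 := round_lt Ht2.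
have [Eb Eq] : b1 = b2 /\ q1 = q2 by case: b1 b2 Es {Ex Ht1 Ht2} => [] []; lia.
subst b2 q2; move/eqP: Ex; rewrite ![j1 + _]addnC ![j2 + _]addnC eqn_modDl.
by rewrite !modn_small // => /eqP ->.
Qed.

End BaseRoute.

Lemma modn_mul_pred p i : 0 < i <= p -> i * p.-1 %% p = p - i.
Proof.
move=> Hi; have -> : i * p.-1 = i.-1 * p + (p - i) by nia.
by rewrite modnMDl modn_small //; lia.
Qed.

Lemma mulS_pred_leq p j t : j < p -> j * p.-1 <= t -> t %% p = p.-1 - j ->
  j.+1 * p.-1 <= t.
Proof.
move=> Hj Ht Et; rewrite (divn_eq t p) Et in Ht *.
have [Hq|Hq] := ltnP (t %/ p) j; nia.
Qed.

Lemma modn_succ_inj p t1 t2 : t1 < p -> t2 < p -> t1.+1 %% p = t2.+1 %% p -> t1 = t2.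
Proof. by move=> H1 H2 /eqP; rewrite -(addn1 t1) -(addn1 t2) eqn_modDr !modn_small // => /eqP. Qed.

Lemma modn_succ_neq p t : 1 < p -> t < p -> t.+1 %% p != t.
Proof.
move=> Hp Ht; rewrite -{2}(modn_small Ht) -(addn1 t) -{2}(addn0 t).
by rewrite eqn_modDl mod0n modn_small.
Qed.

Lemma modn_addl_inj m x a b : a < m -> b < m -> (x + a) %% m = (x + b) %% m -> a = b.
Proof. by move=> Ha Hb /eqP; rewrite eqn_modDl !modn_small // => /eqP. Qed.

Section LowerBoundSystem.
Variables (n' k' : nat).
Local Notation N := n'.+1.
Local Notation K := k'.+1.
Hypotheses (N_ge9 : 9 <= N) (K_ge2 : 2 <= K) (K_half : K.*2 <= N).

Definition nbase := N - K.
Definition nrounds := (nbase - 2) %/ 2.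
Definition period := nrounds * (2 * nbase).
Local Notation m := nbase.
Local Notation D := nrounds.
Local Notation p := period.

Lemma nbase_add : m + K = N. Proof. rewrite /nbase; lia. Qed.
Lemma nbase_ge : K <= m. Proof. rewrite /nbase; lia. Qed.
Lemma nrounds_gt0 : 0 < D. Proof. rewrite /nrounds /nbase; lia. Qed.
Lemma nrounds_small : (2 * D).+1 < m. Proof. rewrite /nrounds /nbase; lia. Qed.
Lemma period_ge : 2 * m <= p. Proof. have := nrounds_gt0; rewrite /period; nia. Qed.
Lemma K_lt_period : K < p. Proof. by have := period_ge; have := nbase_ge; lia. Qed.
Lemma period_gt1 : 1 < p. Proof. by have := K_lt_period; lia. Qed.

Lemma period_large : N * (N - 8) < 8 * p.-1.
Proof.
have : m - 3 <= 2 * D by rewrite /nrounds; lia.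
rewrite /period /nbase; nia.
Qed.

(* Carrier [i] runs the base route shifted by [i], except at time [p.-1 - i],
   where it visits site [m + i], and (for [i > 0]) at time [p - i], where it
   visits site [m + i.-1]; carriers [i] and [i.+1] thus meet exactly once per
   period, at site [m + i], and the last site [m + k'] is visited by carrier
   [k'] alone. *)
Definition route (i t : nat) : nat :=
  if t == p.-1 - i then m + i
  else if (0 < i) && (t == p - i) then m + i.-1
  else (base_route m t + i) %% m.

Lemma route_cases i t :
  [\/ t = p.-1 - i /\ route i t = m + i,
      [/\ 0 < i, t = p - i & route i t = m + i.-1] |
      route i t = (base_route m t + i) %% m].
Proof.
rewrite /route; case: eqP => [-> | _]; first by constructor 1.
by case: ifP => [/andP[Hi /eqP ->] | _]; [constructor 2 | constructor 3].
Qed.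

Lemma route_base_lt i t : (base_route m t + i) %% m < m.
Proof. by rewrite ltn_pmod //; have := nbase_ge; lia. Qed.

Lemma route_base i t : t < p.-1 - i -> route i t = (base_route m t + i) %% m.
Proof. by case: (route_cases i t) => [[] | [] | ]; lia. Qed.

Lemma route_lt i t : i < K -> route i t < N.
Proof.
have := route_base_lt i t; have := nbase_add.
by case: (route_cases i t) => [[] | [] | ]; lia.
Qed.

Lemma route_ltm i t : route i t < m -> route i t = (base_route m t + i) %% m.
Proof. by case: (route_cases i t) => [[] | [] | ]; lia. Qed.

Lemma route_special i t : m <= route i t ->
  (t = p.-1 - i /\ route i t = m + i) \/ [/\ 0 < i, t = p - i & route i t = m + i.-1].
Proof.
case: (route_cases i t) => [? | ? | ->]; [by left | by right |].
by rewrite leqNgt route_base_lt.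
Qed.

Lemma route_special_inj i t1 t2 : route i t1 = route i t2 -> m <= route i t1 -> t1 = t2.
Proof.
move=> E Hge; have Hge2 : m <= route i t2 by rewrite -E.
move: E; case: (route_special Hge) => [[] | []]; case: (route_special Hge2) => [[] | []]; lia.
Qed.

Lemma route_base_inj i t1 t2 : route i t1 = route i t2 -> route i t1 < m ->
  base_route m t1 = base_route m t2.
Proof.
move=> E Hlt; have Hlt2 : route i t2 < m by rewrite -E.
move: E; rewrite (route_ltm Hlt) (route_ltm Hlt2) ![_ + i]addnC.
by apply: modn_addl_inj; apply: base_route_lt; have := nbase_ge; lia.
Qed.

Lemma route_meet a b t : a < K -> b < K -> a != b -> route a t = route b t ->
  (b = a.+1 /\ t = p.-1 - a) \/ (a = b.+1 /\ t = p.-1 - b).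
Proof.
move=> Ha Hb /eqP Hab E; have HKm := nbase_ge; have Hp := K_lt_period.
have [Hlt|Hge] := ltnP (route a t) m.
  have Hltb : route b t < m by rewrite -E.
  move: E; rewrite (route_ltm Hlt) (route_ltm Hltb) => /modn_addl_inj E.
  by exfalso; apply: Hab; apply: E; lia.
have Hgeb : m <= route b t by rewrite -E.
move: E; case: (route_special Hge) => [[] | []]; case: (route_special Hgeb) => [[] | []]; lia.
Qed.

Lemma route_succ_neq i t : t < p -> route i (t.+1 %% p) != route i t.
Proof.
move=> Ht; apply/eqP => E.
have [Hlt|Hge] := ltnP (route i (t.+1 %% p)) m.
  move: (route_base_inj E Hlt) => /eqP.
  by rewrite (negbTE (base_route_succ_neq nrounds_gt0 nrounds_small Ht)).
by move: (route_special_inj E Hge) => /eqP; rewrite (negbTE (modn_succ_neq period_gt1 Ht)).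
Qed.

Lemma route_edge_inj i t1 t2 : t1 < p -> t2 < p -> route i t1 = route i t2 ->
  route i (t1.+1 %% p) = route i (t2.+1 %% p) -> t1 = t2.
Proof.
move=> Ht1 Ht2 E E'.
have [Hge|Hlt] := leqP m (route i t1); first exact: route_special_inj E Hge.
have [Hge'|Hlt'] := leqP m (route i (t1.+1 %% p)).
  exact: modn_succ_inj Ht1 Ht2 (route_special_inj E' Hge').
apply: (base_route_edge_inj nrounds_gt0 nrounds_small Ht1 Ht2).
  exact: route_base_inj E Hlt.
exact: route_base_inj E' Hlt'.
Qed.

Definition chain_system : PVsys 'I_N 'I_K :=
  @PVSys _ _ (fun _ => p) (fun (c : 'I_K) t => inord (route c t)).

Lemma chain_well_formed : well_formed chain_system.
Proof. by move=> c; rewrite ltnW // period_gt1. Qed.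

Lemma chain_pos (c : 'I_K) t : val (pos chain_system c t) = route c (t %% p).
Proof. by rewrite /pos /= inordK // route_lt. Qed.

Lemma chain_simple : simple_PV chain_system.
Proof.
move=> c; split=> [t Ht | t1 t2 Ht12 Ht2].
  by rewrite eq_sym -(inj_eq val_inj) !chain_pos (modn_small Ht) route_succ_neq.
have Ht1 : t1 < p by apply: ltn_trans Ht2.
move=> /(congr1 val); rewrite -(inj_eq val_inj) !chain_pos (modn_small Ht1) (modn_small Ht2) => E.
by apply/eqP => /(route_edge_inj Ht1 Ht2 E) Et; rewrite Et ltnn in Ht12.
Qed.

(* Since carriers [c] and [c.+1] meet only at times [p.-1 - c] modulo [p], an
   agent injected on carrier [0] can sit on carrier [c] only from time
   [c * p.-1] on. *)
Definition reachable_in_time (t : nat) (x : 'I_N) : Prop :=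
  exists2 c : 'I_K, c * p.-1 <= t & x = pos chain_system c t.

Lemma reachable_in_time_step t c :
  reachable_in_time t (pos chain_system c t) -> reachable_in_time t.+1 (pos chain_system c t.+1).
Proof.
move=> [c0 Hc0 /(congr1 val) E]; exists c; last by [].
have Htp : t %% p < p by rewrite ltn_pmod // ltnW // period_gt1.
have [-> | Hne] := eqVneq c c0; first exact: leqW.
move: E; rewrite !chain_pos => /(route_meet (ltn_ord c) (ltn_ord c0) Hne) [[Ec0 _] | [Ec Et]].
  by apply: leqW; apply: leq_trans Hc0; rewrite Ec0 leq_mul2r leqnSn orbT.
rewrite Ec; apply: leqW; apply: mulS_pred_leq Hc0 Et.
by apply: leq_trans (ltn_ord c0) _; have := period_ge; have := nbase_ge; lia.
Qed.

Lemma reachable_in_time_target t : reachable_in_time t ord_max -> K * p.-1 <= t.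
Proof.
move=> [c Hc /(congr1 val)]; rewrite chain_pos /= => E.
have HN := nbase_add; have Hp := K_lt_period; have Hc' := ltn_ord c.
have Hge : m <= route c (t %% p) by rewrite -E; lia.
have [[Et Er] | [_ _ Er]] := route_special Hge; last by lia.
have Ec : c = k' :> nat by lia.
by rewrite Ec in Et Hc; apply: mulS_pred_leq Hc Et; lia.
Qed.

Lemma chain_cost_ge (sigma : strategy 'I_N 'I_K) :
  solves chain_system sigma -> K * p.-1 <= cost chain_system sigma.
Proof.
move=> sol; apply: (cost_ge_invariant (s := pos chain_system ord0 0)) sol _
  reachable_in_time_step _ reachable_in_time_target.
- exact: imset_f.
- by exists ord0.
Qed.

Lemma pos_meet_own i t : i < K -> t %% p = p.-1 - i ->
  pos chain_system (inord i) t = inord (m + i).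
Proof.
move=> Hi Et; have := nbase_add => HN.
by apply: val_inj; rewrite chain_pos Et /= !inordK /route ?eqxx //; lia.
Qed.

Lemma pos_meet_next i t : 0 < i < K -> t %% p = p - i ->
  pos chain_system (inord i) t = inord (m + i.-1).
Proof.
move=> /andP[Hi0 Hi] Et; have := K_lt_period; have := nbase_add => HN Hp.
apply: val_inj; rewrite chain_pos Et /= !inordK /route; try lia.
by rewrite ifN_eq ?Hi0 ?eqxx //; apply/eqP; lia.
Qed.

Lemma chain_handoff j : j.+1 < K ->
  pos chain_system (inord j) (j.+1 * p.-1) = pos chain_system (inord j.+1) (j.+1 * p.-1).
Proof.
move=> Hj; have := K_lt_period => Hp.
rewrite pos_meet_own ?pos_meet_next ?modn_mul_pred //=; lia.
Qed.

(* The exploring walk from carrier [c]: ride [c] to its meeting site [m + c],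
   step down from carrier to carrier to site [m], reached at time [p.-1], then
   ride each of the carriers [1], ..., [k'] for [p.-1] steps; the first of these
   rides sweeps all base sites and each one ends at the next meeting site. *)
Fixpoint descent (j : nat) : seq 'I_K :=
  if j is j'.+1 then inord j :: descent j' else [::].

Fixpoint ascent (j l : nat) : seq 'I_K :=
  if l is l'.+1 then nseq p.-1 (inord j) ++ ascent j.+1 l' else [::].

Lemma descent_walk j : j < K ->
  let x := pos chain_system (inord j) (p.-1 - j) in
  valid_from chain_system x (p.-1 - j) (descent j) /\
  walk_last chain_system x (p.-1 - j) (descent j) = pos chain_system (inord 0) p.-1.
Proof.
have := K_lt_period; elim: j => [|j IH] Hp Hj /=; first by rewrite subn0.
have -> : (p.-1 - j.+1).+1 = p.-1 - j by lia.
have -> : pos chain_system (inord j.+1) (p.-1 - j) = pos chain_system (inord j) (p.-1 - j).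
  by rewrite (pos_meet_next (i := j.+1)) ?(pos_meet_own (i := j)) ?modn_small //; lia.
by rewrite eqxx; apply: IH; lia.
Qed.

Lemma ascent_walk l j : j + l <= K ->
  let x := pos chain_system (inord j) (j * p.-1) in
  valid_from chain_system x (j * p.-1) (ascent j l) /\
  forall i s, j <= i < j + l -> s <= p.-1 ->
    pos chain_system (inord i) (i * p.-1 + s) \in trace chain_system x (j * p.-1) (ascent j l).
Proof.
elim: l j => [|l IH] j Hjl /=; first by split=> // i s; lia.
have Eend : walk_last chain_system (pos chain_system (inord j) (j * p.-1)) (j * p.-1)
    (nseq p.-1 (inord j)) = pos chain_system (inord j) (j.+1 * p.-1).
  by rewrite walk_last_nseq mulSnr.
rewrite valid_from_cat valid_from_nseq Eend size_nseq -mulSnr.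
case: l IH Hjl => [|l] IH Hjl.
  split=> // i s Hi Hs; have -> : i = j by lia.
  by apply: mem_trace_catl; apply: mem_trace_nseq.
rewrite chain_handoff; last by lia.
have Hjl' : j.+1 + l.+1 <= K by lia.
have [IHv IHt] := IH j.+1 Hjl'; split=> // i s Hi Hs.
have [Eij | Hij] := eqVneq i j.
  by rewrite Eij; apply: mem_trace_catl; apply: mem_trace_nseq.
apply: mem_trace_catr; rewrite Eend size_nseq -mulSnr chain_handoff; last by lia.
by apply: IHt; lia.
Qed.

Lemma size_descent j : size (descent j) = j.
Proof. by elim: j => //= j ->. Qed.

Lemma descent_from_start (c : 'I_K) :
  let cs := nseq (p.-1 - c) c ++ descent c in
  [/\ valid_from chain_system (pos chain_system c 0) 0 cs, size cs = p.-1 &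
      walk_last chain_system (pos chain_system c 0) 0 cs = pos chain_system (inord 1) (1 * p.-1)].
Proof.
move=> cs; rewrite {}/cs; have Hp := K_lt_period; have Hc := ltn_ord c.
have Eride : pos chain_system c (0 + (p.-1 - c)) = pos chain_system (inord c) (p.-1 - c).
  by rewrite inord_val.
have [Dv Dl] := descent_walk Hc.
rewrite valid_from_cat walk_last_cat valid_from_nseq walk_last_nseq size_nseq Eride Dv Dl.
rewrite size_cat size_nseq size_descent subnK; last by lia.
by rewrite -(chain_handoff (j := 0)) ?mul1n.
Qed.

Lemma chain_site_visited (y : 'I_N) : exists i s,
  [/\ 0 < i < K, s <= p.-1 & y = pos chain_system (inord i) (i * p.-1 + s)].
Proof.
have HN := nbase_add; have Hp := K_lt_period; have H2m := period_ge.
have [Hy | Hy] := ltnP y m.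
  have Hm : 0 < m by lia.
  have Hm2 : 2 < m by lia.
  have [tau Htau Eb] := base_route_onto Hm2 (ltn_pmod (y + m.-1) Hm).
  exists 1, tau.+1; split; [lia | lia |].
  apply: val_inj; rewrite chain_pos /= inordK // mul1n.
  have -> : p.-1 + tau.+1 = tau + p by lia.
  rewrite modnDr modn_small ?route_base ?Eb ?modnDml; try lia.
  by rewrite -addnA addn1 prednK // modnDr modn_small.
have [Hy1 | Hy1] := ltnP y N.-1.
  exists (y - m).+1, 0; split; [lia | lia |].
  rewrite addn0 pos_meet_next ?modn_mul_pred; try lia.
  by apply: val_inj; rewrite /= inordK; lia.
exists k', p.-1; split; [lia | lia |].
rewrite -mulSnr pos_meet_own ?modn_mul_pred; try lia.
by apply: val_inj; rewrite /= inordK; have := ltn_ord y; lia.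
Qed.

Lemma chain_feasible : feasible chain_system.
Proof.
move=> c; have [Dv Ds Dl] := descent_from_start c.
have [Av At] := @ascent_walk k' 1 (leqnn _).
rewrite mul1n in Dl Av At.
exists ((nseq (p.-1 - c) c ++ descent c) ++ ascent 1 k'); split.
  by rewrite valid_from_cat Dv Dl Ds.
move=> y; have [i [s [Hi Hs ->]]] := chain_site_visited y.
by apply: mem_trace_catr; rewrite Dl Ds; apply: At; lia.
Qed.

Lemma chain_cost_bound (sigma : strategy 'I_N 'I_K) :
  solves chain_system sigma -> K * (N * (N - 8)) < 8 * cost chain_system sigma.
Proof.
move=> /chain_cost_ge Hcost; apply: leq_trans (_ : K * (8 * p.-1) <= _).
  by rewrite ltn_pmul2l ?period_large //; lia.
by rewrite mulnCA leq_mul2l Hcost orbT.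
Qed.

End LowerBoundSystem.

Section RotationSystem.
Variables (n' K : nat).
Local Notation N := n'.+2.

Definition rotation_system : PVsys 'I_N 'I_K :=
  @PVSys _ _ (fun _ => N) (fun (c : 'I_K) t => inord ((t + c) %% N)).

Lemma rotation_pos (c : 'I_K) t : val (pos rotation_system c t) = (t %% N + c) %% N.
Proof. by rewrite /pos /= inordK ?ltn_pmod. Qed.

Lemma rotation_simple : simple_PV rotation_system.
Proof.
move=> c; split=> [t Ht | t1 t2 Ht12 Ht2 /(congr1 val)].
  rewrite eq_sym -(inj_eq val_inj) !rotation_pos (modn_small Ht) modnDml eqn_modDr.
  by rewrite (modn_small Ht) modn_succ_neq.
have Ht1 := ltn_trans Ht12 Ht2.
rewrite !rotation_pos (modn_small Ht1) (modn_small Ht2) => /eqP.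
by rewrite eqn_modDr (modn_small Ht1) (modn_small Ht2) => /eqP Et; lia.
Qed.

Lemma rotation_feasible : feasible rotation_system.
Proof.
move=> c; exists (nseq N.-1 c); split=> [|y]; first exact: valid_from_nseq.
set t := (y + (N - c %% N)) %% N.
have -> : y = pos rotation_system c (0 + t).
  apply: val_inj; rewrite rotation_pos add0n modn_mod modnDml -modnDmr -addnA.
  rewrite subnK; last exact/ltnW/ltn_pmod.
  by rewrite modnDr modn_small.
by apply: mem_trace_nseq; rewrite -ltnS ltn_pmod.
Qed.

Lemma rotation_cost_gt0 (sigma : strategy 'I_N 'I_K) (c : 'I_K) :
  solves rotation_system sigma -> 0 < cost rotation_system sigma.
Proof.
move=> sol; have Hs : pos rotation_system c 0 \in start rotation_system by apply: imset_f.
apply: leq_trans (cost_ge_size _ Hs).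
apply: (explores_size_gt0 (y := pos rotation_system c 1) _ (sol _ Hs)).
by rewrite eq_sym (rotation_simple c).1.
Qed.

End RotationSystem.

Theorem mainTheorem5 (n k : nat) :
  4 <= n -> 2 <= k -> k.*2 <= n ->
  exists R : PVsys 'I_n 'I_k,
    [/\ well_formed R, homogeneous R, simple_PV R, feasible R &
        forall sigma : strategy 'I_n 'I_k, solves R sigma ->
          ((k * n)%:Z * (n%:Z - 8) < (8 * cost R sigma)%:Z)%R].
Proof.
case: n => [|[|n']] // _; case: k => [|k'] // Hk Hkn.
have [Hsmall | Hlarge] := leqP n'.+2 8.
  exists (rotation_system n' k'.+1); split=> //.
  - exact: rotation_simple.
  - exact: rotation_feasible.
  move=> sigma sol; apply: (@le_lt_trans _ _ 0%R).
    by rewrite pmulr_rle0 ?ltz_nat ?muln_gt0 // subr_le0 lez_nat.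
  by rewrite ltz_nat muln_gt0 (rotation_cost_gt0 ord0 sol).
exists (chain_system n'.+1 k'); split=> //.
- exact: chain_well_formed Hlarge Hk Hkn.
- exact: chain_simple Hlarge Hk Hkn.
- exact: chain_feasible Hlarge Hk Hkn.
have -> : (n'.+2%:Z - 8 = (n'.+2 - 8)%:Z)%R by rewrite -subzn // ltnW.
move=> sigma sol; rewrite -PoszM ltz_nat -mulnA.
exact: chain_cost_bound sol.
Qed.
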